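(* Let $D_n=\sum_{k=0}^n\binom{n}{k}^2\binom{2k}{k}\binom{2(n-k)}{n-k}$ for $n\ge 0$ (the Domb numbers). Then the ratio sequence $\{D_{n+1}/D_n\}_{n\ge 0}$ is ratio log-convex, i.e. the sequence $\{y_n\}_{n\ge0}$ with $y_n=\frac{D_{n+2}D_n}{D_{n+1}^2}$ satisfies $y_{n-1}y_{n+1}\ge y_n^2$ for all $n\ge 1$.
   Context: A sequence $\{x_n\}$ of positive numbers is log-convex if $x_{n-1}x_{n+1}\ge x_n^2$ for all $n\ge1$; it is called ratio log-convex if $\{x_{n+1}/x_n\}$ is log-convex. *)

From mathcomp Require Import all_boot all_order all_algebra.
Set Implicit Arguments. Unset Strict Implicit. Unset Printing Implicit Defensive.
Import Order.TTheory GRing.Theory Num.Theory.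
Local Open Scope ring_scope.

Definition domb (n : nat) : nat :=
  (\sum_(0 <= k < n.+1) 'C(n, k) ^ 2 * 'C(2 * k, k) * 'C(2 * (n - k), n - k))%N.

Definition domb_y (n : nat) : rat :=
  ((domb n.+2)%:R * (domb n)%:R) / ((domb n.+1)%:R ^+ 2).

From mathcomp Require Import all_boot all_order all_algebra.
From mathcomp Require Import ring zify.
Import Order.TTheory GRing.Theory Num.Theory.
Local Open Scope ring_scope.

(* Creative telescoping on the summand gives the recurrence
   (n+2)^3 D_{n+2} = 2(2n+3)(5n^2+15n+12) D_{n+1} - 64(n+1)^3 D_n.
   In terms of r_n = D_{n+1}/D_n it reads r_{n+1} = (a_n - b_n/r_n)/c_n, an increasing
   function of r_n, so bounds L(n) <= r_n <= U(n) propagate by induction as soon as they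
   hold at one index and are themselves mapped inside by the step; here
   U(x) = 16 - 48/(2x+3) and L(x) = U(x) - 16/x^4.  The claim is
   r_{n-1} r_{n+1}^3 <= r_n^3 r_{n+2}, which for n >= 6 follows from the polynomial
   inequality U(n-1) U(n+1)^3 <= L(n)^3 L(n+2); the first cases are computed. *)

Definition domb_term (n k : nat) : nat :=
  ('C(n, k) ^ 2 * 'C(2 * k, k) * 'C(2 * (n - k), n - k))%N.

Lemma domb_term_small {n k : nat} : (n < k)%N -> domb_term n k = 0%N.
Proof. by move=> lt_nk; rewrite /domb_term bin_small. Qed.

Lemma mul_bin_center j : ('C(2 * j.+1, j.+1) * j.+1 = 2 * (2 * j + 1) * 'C(2 * j, j))%N.
Proof.
  have sym : 'C((2 * j).+1, j.+1) = 'C((2 * j).+1, j).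
    by rewrite -bin_sub; [congr 'C(_, _) |]; lia.
  have := mul_bin_diag (2 * j).+2 j; have := mul_bin_diag (2 * j).+1 j.
  rewrite /= sym (_ : 2 * j.+1 = (2 * j).+2)%N; last by lia.
  lia.
Qed.

Lemma domb_termSn k j :
  (j.+1 ^ 3 * domb_term (k + j).+1 k = 2 * (k + j).+1 ^ 2 * (2 * j + 1) * domb_term (k + j) k)%N.
Proof.
  have eSj : ((k + j).+1 - k = j.+1)%N by lia.
  have ej : (k + j - k = j)%N by lia.
  have hC := mul_bin_down (k + j).+1 k; rewrite eSj /= in hC.
  have hB := mul_bin_center j.
  rewrite /domb_term eSj ej.
  transitivity ((j.+1 * 'C((k + j).+1, k)) ^ 2 * 'C(2 * k, k) * ('C(2 * j.+1, j.+1) * j.+1))%N;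
    first by ring.
  by rewrite -hC hB; ring.
Qed.

Lemma domb_termSk k j :
  (k.+1 ^ 3 * (2 * j + 1) * domb_term (k + j.+1) k.+1
   = j.+1 ^ 3 * (2 * k + 1) * domb_term (k + j.+1) k)%N.
Proof.
  have ej : (k + j.+1 - k.+1 = j)%N by lia.
  have eSj : (k + j.+1 - k = j.+1)%N by lia.
  have hC := mul_bin_left (k + j.+1) k; rewrite eSj in hC.
  have hk := mul_bin_center k; have hj := mul_bin_center j.
  rewrite /domb_term ej eSj.
  transitivity ((k.+1 * 'C(k + j.+1, k.+1)) ^ 2 * ('C(2 * k.+1, k.+1) * k.+1)
                * ((2 * j + 1) * 'C(2 * j, j)))%N; first by ring.
  rewrite [RHS](_ : _ = (j.+1 * 'C(k + j.+1, k)) ^ 2 * ((2 * k + 1) * 'C(2 * k, k))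
                        * ('C(2 * j.+1, j.+1) * j.+1))%N; last by ring.
  by rewrite hC hk hj; ring.
Qed.

Lemma domb_termSn_rat m k :
  (m.+1%:R - k%:R) ^+ 3 * (domb_term m.+1 k)%:R
  = 2 * m.+1%:R ^+ 2 * (2 * m%:R + 1 - 2 * k%:R) * (domb_term m k)%:R :> rat.
Proof.
  have [le_km | lt_mk] := leqP k m.
    have [j ->] : exists j, m = (k + j)%N by exists (m - k)%N; lia.
    transitivity ((j.+1 ^ 3 * domb_term (k + j).+1 k)%N%:R : rat); first by ring.
    by rewrite domb_termSn; ring.
  rewrite (domb_term_small lt_mk) mulr0.
  have [-> | ne_kSm] := eqVneq k m.+1; first by rewrite subrr expr0n mul0r.
  by rewrite domb_term_small ?mulr0 //; lia.
Qed.

Lemma domb_termSk_rat m k :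
  (k%:R + 1) ^+ 3 * (2 * m%:R - 2 * k%:R - 1) * (domb_term m k.+1)%:R
  = (m%:R - k%:R) ^+ 3 * (2 * k%:R + 1) * (domb_term m k)%:R :> rat.
Proof.
  have [lt_km | le_mk] := ltnP k m.
    have [j ->] : exists j, m = (k + j.+1)%N by exists (m - k.+1)%N; lia.
    transitivity ((k.+1 ^ 3 * (2 * j + 1) * domb_term (k + j.+1) k.+1)%N%:R : rat);
      first by ring.
    by rewrite domb_termSk; ring.
  rewrite (@domb_term_small m k.+1) ?mulr0; last by lia.
  have [-> | ne_km] := eqVneq k m; first by rewrite subrr expr0n /= !mul0r.
  by rewrite domb_term_small ?mulr0 //; lia.
Qed.

Definition domb_cert_poly {F : numFieldType} (n k : F) : F :=
  -224 + 296 * k - 120 * k^+2 + 16 * k^+3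
  + n * (-864 + 948 * k - 312 * k^+2 + 32 * k^+3)
  + n^+2 * (-1304 + 1112 * k - 264 * k^+2 + 16 * k^+3)
  + n^+3 * (-960 + 564 * k - 72 * k^+2)
  + n^+4 * (-344 + 104 * k) - 48 * n^+5.

(* [t_i] stands for [domb_term (n + i) k] and [t2'] for [domb_term (n + 2) (k + 1)]. *)
Lemma domb_operator_telescopes {F : numFieldType} (n k t0 t1 t2 t2' : F)
  (nz3 : 2 * n + 3 - 2 * k != 0) (nz1 : 2 * n + 1 - 2 * k != 0)
  (nzn1 : n + 1 != 0) (nzn2 : n + 2 != 0) (nzk1 : k + 1 != 0)
  (shift_n1 : (n + 2 - k) ^+ 3 * t2 = 2 * (n + 2) ^+ 2 * (2 * n + 3 - 2 * k) * t1)
  (shift_n0 : (n + 1 - k) ^+ 3 * t1 = 2 * (n + 1) ^+ 2 * (2 * n + 1 - 2 * k) * t0)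
  (shift_k : (k + 1) ^+ 3 * (2 * n + 3 - 2 * k) * t2' = (n + 2 - k) ^+ 3 * (2 * k + 1) * t2) :
  (n + 2) ^+ 3 * t2 - 2 * (2 * n + 3) * (5 * n ^+ 2 + 15 * n + 12) * t1 + 64 * (n + 1) ^+ 3 * t0
  = t2' * (k + 1) ^+ 3 * domb_cert_poly n (k + 1) / (4 * (n + 1) ^+ 2 * (n + 2) ^+ 2 * (2 * n + 1 - 2 * k))
    - t2 * k ^+ 3 * domb_cert_poly n k / (4 * (n + 1) ^+ 2 * (n + 2) ^+ 2 * (2 * n + 3 - 2 * k)).
Proof.
  have et0 : t0 = (n + 1 - k) ^+ 3 * t1 / (2 * (n + 1) ^+ 2 * (2 * n + 1 - 2 * k)).
    by rewrite shift_n0; field; rewrite ?nz3 ?nz1 ?nzn1 ?nzn2 ?nzk1.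
  have et1 : t1 = (n + 2 - k) ^+ 3 * t2 / (2 * (n + 2) ^+ 2 * (2 * n + 3 - 2 * k)).
    by rewrite shift_n1; field; rewrite ?nz3 ?nz1 ?nzn1 ?nzn2 ?nzk1.
  have et2' : t2' = (n + 2 - k) ^+ 3 * (2 * k + 1) * t2 / ((k + 1) ^+ 3 * (2 * n + 3 - 2 * k)).
    by rewrite -shift_k; field; rewrite ?nz3 ?nz1 ?nzn1 ?nzn2 ?nzk1.
  rewrite et2' et0 et1 /domb_cert_poly; field.
  by rewrite nz3 nz1 nzn1 nzn2 nzk1.
Qed.

(* Zeilberger's certificate for the summand of [domb]. *)
Definition domb_cert (n k : nat) : rat :=
  (domb_term n.+2 k)%:R * k%:R ^+ 3 * domb_cert_poly n%:R k%:R
  / (4 * (n%:R + 1) ^+ 2 * (n%:R + 2) ^+ 2 * (2 * n%:R + 3 - 2 * k%:R)).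

Lemma domb_term_rec n k :
  (n%:R + 2) ^+ 3 * (domb_term n.+2 k)%:R
  - 2 * (2 * n%:R + 3) * (5 * n%:R ^+ 2 + 15 * n%:R + 12) * (domb_term n.+1 k)%:R
  + 64 * (n%:R + 1) ^+ 3 * (domb_term n k)%:R
  = domb_cert n k.+1 - domb_cert n k.
Proof.
  have odd_neq0 a b : (2 * a%:R + 1 - 2 * b%:R != 0 :> rat).
    rewrite (_ : 2 * a%:R + 1 - 2 * b%:R = (2 * a + 1)%N%:R - (2 * b)%N%:R); last by ring.
    by rewrite subr_eq0 eqr_nat; apply/eqP; lia.
  have hA : 2 * n%:R + 3 - 2 * k%:R != 0 :> rat.
    by rewrite (_ : 2 * n%:R + 3 - 2 * k%:R = 2 * n.+1%:R + 1 - 2 * k%:R) ?odd_neq0 //; ring.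
  have eSn : n.+1%:R = n%:R + 1 :> rat by ring.
  have eSSn : n.+2%:R = n%:R + 2 :> rat by ring.
  have eSk : k.+1%:R = k%:R + 1 :> rat by ring.
  rewrite /domb_cert eSk (_ : 2 * n%:R + 3 - 2 * (k%:R + 1) = 2 * n%:R + 1 - 2 * k%:R); last by ring.
  apply: domb_operator_telescopes; rewrite ?odd_neq0 // -?eSn -?eSSn -?eSk ?pnatr_eq0 //.
  - by have := domb_termSn_rat n.+1 k; rewrite eSSn eSn => ->; ring.
  - by have := domb_termSn_rat n k; rewrite eSn.
  - have := domb_termSk_rat n.+2 k; rewrite eSSn => <-; ring.
Qed.

Lemma domb_sum_widen n p : domb n = (\sum_(0 <= k < n.+1 + p) domb_term n k)%N.
Proof.
  elim: p => [|p IHp]; first by rewrite addn0.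
  by rewrite addnS big_nat_recr //= domb_term_small ?addn0 //; lia.
Qed.

Lemma domb_rec_rat n :
  (n%:R + 2) ^+ 3 * (domb n.+2)%:R
  - 2 * (2 * n%:R + 3) * (5 * n%:R ^+ 2 + 15 * n%:R + 12) * (domb n.+1)%:R
  + 64 * (n%:R + 1) ^+ 3 * (domb n)%:R = 0 :> rat.
Proof.
  rewrite (domb_sum_widen n.+2 0) (domb_sum_widen n.+1 1) (domb_sum_widen n 2).
  rewrite !addnS !addn0.
  rewrite !natr_sum !mulr_sumr -sumrB -big_split /=.
  under eq_big_nat => k _ do rewrite domb_term_rec.
  by rewrite telescope_sumr // /domb_cert domb_term_small // !mulr0 !mul0r subrr.
Qed.

Lemma domb_rec n :
  ((n + 2) ^ 3 * domb n.+2 + 64 * (n + 1) ^ 3 * domb n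
   = 2 * (2 * n + 3) * (5 * n ^ 2 + 15 * n + 12) * domb n.+1)%N.
Proof.
  apply/eqP; rewrite -(eqr_nat rat) -subr_eq0; apply/eqP.
  by rewrite -(domb_rec_rat n); ring.
Qed.

Lemma domb_gt0 n : (0 < domb n)%N.
Proof.
  rewrite (domb_sum_widen n 0) addn0 big_nat_recl // /domb_term bin0 subn0.
  by rewrite ltn_addr // !muln_gt0 !bin_gt0; lia.
Qed.

(* Stdlib reals have binary numerals; MathComp's [n%:R] are unary, which rules them out
   for the constants below (up to 10^24). *)
Module DombRatios.
From Stdlib Require Import Reals Lra Lia Psatz List.
Import ssrnat.
Local Close Scope ring_scope. Local Open Scope R_scope.

Fixpoint horner (cs : list R) (t : R) : R :=
  match cs with nil => 0 | c :: cs => c + t * horner cs t end.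

Lemma horner_nonneg cs t : Forall (Rle 0) cs -> 0 <= t -> 0 <= horner cs t.
Proof.
  intros Hcs Ht; induction Hcs as [|c cs Hc _ IH]; simpl; [lra|].
  apply Rplus_le_le_0_compat; [exact Hc|]. now apply Rmult_le_pos.
Qed.

Lemma nonneg_of_mul_pos (e den num : R) : 0 < den -> e * den = num -> 0 <= num -> 0 <= e.
Proof. intros Hden Heq Hnum. destruct (Rle_or_lt 0 e) as [H|H]; [exact H|nra]. Qed.

Ltac nonneg_coeffs := repeat (apply Forall_cons; [lra|]); apply Forall_nil.

Definition rec_a (x : R) := 2 * (2 * x + 3) * (5 * x ^ 2 + 15 * x + 12).
Definition rec_b (x : R) := 64 * (x + 1) ^ 3.
Definition rec_c (x : R) := (x + 2) ^ 3.

Definition ratio_ub (x : R) := 16 - 48 / (2 * x + 3).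
Definition ratio_lb (x : R) := ratio_ub x - 16 / x ^ 4.

Lemma ratio_ub_pos x : 0 < x -> 0 < ratio_ub x.
Proof.
  intros Hx. unfold ratio_ub.
  replace (16 - 48 / (2 * x + 3)) with (32 * x / (2 * x + 3)) by (field; lra).
  apply Rdiv_lt_0_compat; lra.
Qed.

Lemma ratio_lb_pos x : 2 <= x -> 0 < ratio_lb x.
Proof.
  intros Hx. unfold ratio_lb, ratio_ub.
  replace (16 - 48 / (2 * x + 3) - 16 / x ^ 4)
    with ((32 * x ^ 5 - 32 * x - 48) / ((2 * x + 3) * x ^ 4)) by (field; lra).
  apply Rdiv_lt_0_compat; [|apply Rmult_lt_0_compat; [lra|apply pow_lt; lra]].
  assert (H4 : 16 <= x ^ 4) by (replace 16 with (2 ^ 4) by ring; apply pow_incr; lra).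
  nra.
Qed.

Lemma ratio_ub_step x : 0 <= x ->
  rec_a x * ratio_ub x - rec_b x <= rec_c x * ratio_ub x * ratio_ub (x + 1).
Proof.
  intros Hx.
  enough (0 <= rec_c x * ratio_ub x * ratio_ub (x + 1) - (rec_a x * ratio_ub x - rec_b x)) by lra.
  apply (nonneg_of_mul_pos _ ((2 * x + 3) * (2 * x + 5)) (960 + 576 * x)); [nra| |lra].
  unfold rec_a, rec_b, rec_c, ratio_ub. field. lra.
Qed.

(* The numerators below are expanded in powers of [x - 5] and [x - 6], where all their
   coefficients are nonnegative. *)
Lemma ratio_lb_step x : 5 <= x ->
  rec_c x * ratio_lb x * ratio_lb (x + 1) <= rec_a x * ratio_lb x - rec_b x.
Proof.
  intros Hx.
  enough (0 <= rec_a x * ratio_lb x - rec_b x - rec_c x * ratio_lb x * ratio_lb (x + 1)) by lra.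
  apply (nonneg_of_mul_pos _ ((2 * x + 3) * x ^ 4 * ((2 * x + 5) * (x + 1) ^ 4))
           (horner (569265408 :: 1428559104 :: 1281462016 :: 604855808 :: 172300672
                    :: 31274720 :: 3649248 :: 265024 :: 10880 :: 192 :: nil) (x - 5))).
  - repeat apply Rmult_lt_0_compat; try apply pow_lt; lra.
  - unfold rec_a, rec_b, rec_c, ratio_lb, ratio_ub; simpl horner. field. lra.
  - apply horner_nonneg; [nonneg_coeffs|lra].
Qed.

Lemma ratio_bounds_log_convex x : 6 <= x ->
  ratio_ub (x - 1) * ratio_ub (x + 1) ^ 3 <= ratio_lb x ^ 3 * ratio_lb (x + 2).
Proof.
  intros Hx.
  enough (0 <= ratio_lb x ^ 3 * ratio_lb (x + 2) - ratio_ub (x - 1) * ratio_ub (x + 1) ^ 3) by lra.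
  apply (nonneg_of_mul_pos _
    (((2 * x + 3) * x ^ 4) ^ 3 * ((2 * x + 7) * (x + 2) ^ 4) * ((2 * x + 1) * (2 * x + 5) ^ 3))
    (horner (376918345437188834525184 :: 1504282283451214077100032 :: 2676294648785772255117312
      :: 2887127736123859726761984 :: 2144108407873452921585664 :: 1173784779583248250961920
      :: 493839737380393201958912 :: 164041851328760771510272 :: 43796554912529130717184
      :: 9507207386358078767104 :: 1689399091016514404352 :: 246423608173837418496
      :: 29477785523902742528 :: 2877967230019043328 :: 227209451028873216
      :: 14288168192835584 :: 699195657814016 :: 25668563763200 :: 665241780224
      :: 10854858752 :: 83886080 :: nil) (x - 6))).
  - repeat apply Rmult_lt_0_compat; try apply pow_lt; try apply Rmult_lt_0_compat;
      try apply pow_lt; lra.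
  - unfold ratio_lb, ratio_ub; simpl horner. field. lra.
  - apply horner_nonneg; [nonneg_coeffs|lra].
Qed.

Definition ratio_step (x r : R) : R := (rec_a x - rec_b x / r) / rec_c x.

Lemma rec_coeffs_pos x : 0 <= x -> 0 < rec_c x /\ 0 <= rec_b x.
Proof.
  intros Hx; unfold rec_b, rec_c; split; [apply pow_lt; lra|].
  apply Rmult_le_pos; [lra|apply pow_le; lra].
Qed.

Lemma ratio_step_le x r s : 0 <= x -> 0 < r -> r <= s -> ratio_step x r <= ratio_step x s.
Proof.
  intros Hx Hr Hrs. destruct (rec_coeffs_pos x Hx) as [Hc Hb].
  unfold ratio_step, Rdiv. apply Rmult_le_compat_r; [left; apply Rinv_0_lt_compat; exact Hc|].
  enough (rec_b x * / s <= rec_b x * / r) by lra.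
  apply Rmult_le_compat_l; [exact Hb|]. apply Rinv_le_contravar; assumption.
Qed.

Lemma ratio_stepE x r : 0 <= x -> 0 < r ->
  ratio_step x r * (rec_c x * r) = rec_a x * r - rec_b x.
Proof.
  intros Hx Hr. destruct (rec_coeffs_pos x Hx) as [Hc _]. unfold ratio_step. field. lra.
Qed.

Lemma ratio_step_le_of x r s : 0 <= x -> 0 < r ->
  rec_a x * r - rec_b x <= rec_c x * r * s -> ratio_step x r <= s.
Proof.
  intros Hx Hr H. destruct (rec_coeffs_pos x Hx) as [Hc _].
  apply (Rmult_le_reg_r (rec_c x * r)); [nra|]. rewrite (ratio_stepE x r Hx Hr). lra.
Qed.

Lemma ratio_step_ge_of x r s : 0 <= x -> 0 < r ->
  rec_c x * r * s <= rec_a x * r - rec_b x -> s <= ratio_step x r.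
Proof.
  intros Hx Hr H. destruct (rec_coeffs_pos x Hx) as [Hc _].
  apply (Rmult_le_reg_r (rec_c x * r)); [nra|]. rewrite (ratio_stepE x r Hx Hr). lra.
Qed.

Lemma log_ineq_of_ratios a b c e f : 0 < a -> 0 < b -> 0 < c -> 0 < e -> 0 < f ->
  b / a * (e / c) ^ 3 <= (c / b) ^ 3 * (f / e) -> b ^ 4 * e ^ 4 <= a * f * c ^ 6.
Proof.
  intros Ha Hb Hc He Hf H.
  assert (Hden : 0 < a * b ^ 3 * c ^ 3 * e).
  { repeat apply Rmult_lt_0_compat; try apply pow_lt; lra. }
  apply (Rmult_le_compat_r _ _ _ (Rlt_le _ _ Hden)) in H.
  replace (b / a * (e / c) ^ 3 * (a * b ^ 3 * c ^ 3 * e)) with (b ^ 4 * e ^ 4) in H by (field; lra).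
  replace ((c / b) ^ 3 * (f / e) * (a * b ^ 3 * c ^ 3 * e)) with (a * f * c ^ 6) in H by (field; lra).
  exact H.
Qed.

Definition ratio (d : nat -> R) (n : nat) : R := d (S n) / d n.

Section Ratios.

Variable d : nat -> R.
Hypothesis d_pos : forall n, 0 < d n.
Hypothesis d_rec : forall n,
  rec_c (INR n) * d (S (S n)) + rec_b (INR n) * d n = rec_a (INR n) * d (S n).

Lemma ratio_pos n : 0 < ratio d n.
Proof. apply Rdiv_lt_0_compat; apply d_pos. Qed.

Lemma ratio_S n : ratio d (S n) = ratio_step (INR n) (ratio d n).
Proof.
  unfold ratio, ratio_step. pose proof (d_pos n). pose proof (d_pos (S n)).
  destruct (rec_coeffs_pos (INR n) (pos_INR n)) as [Hc _].
  apply (Rmult_eq_reg_l (rec_c (INR n) * d (S n))); [|nra].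
  replace (rec_c (INR n) * d (S n) * (d (S (S n)) / d (S n)))
    with (rec_c (INR n) * d (S (S n))) by (field; lra).
  replace (rec_c (INR n) * d (S n) * ((rec_a (INR n) - rec_b (INR n) / (d (S n) / d n)) / rec_c (INR n)))
    with (rec_a (INR n) * d (S n) - rec_b (INR n) * d n) by (field; lra).
  rewrite <- d_rec. ring.
Qed.

Lemma ratio_le_bound (U : R -> R) n0 :
  (forall n, (n0 <= n)%coq_nat -> 0 < U (INR n) /\ ratio_step (INR n) (U (INR n)) <= U (INR (S n))) ->
  ratio d n0 <= U (INR n0) -> forall n, (n0 <= n)%coq_nat -> ratio d n <= U (INR n).
Proof.
  intros HU Hbase n Hn. induction Hn as [|n Hn IH]; [exact Hbase|].
  destruct (HU n Hn) as [HUpos Hstep]. rewrite ratio_S.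
  apply (Rle_trans _ (ratio_step (INR n) (U (INR n)))); [|exact Hstep].
  apply ratio_step_le; [apply pos_INR|apply ratio_pos|exact IH].
Qed.

Lemma ratio_ge_bound (L : R -> R) n0 :
  (forall n, (n0 <= n)%coq_nat -> 0 < L (INR n) /\ L (INR (S n)) <= ratio_step (INR n) (L (INR n))) ->
  L (INR n0) <= ratio d n0 -> forall n, (n0 <= n)%coq_nat -> L (INR n) <= ratio d n.
Proof.
  intros HL Hbase n Hn. induction Hn as [|n Hn IH]; [exact Hbase|].
  destruct (HL n Hn) as [HLpos Hstep]. rewrite ratio_S.
  apply (Rle_trans _ (ratio_step (INR n) (L (INR n)))); [exact Hstep|].
  apply ratio_step_le; [apply pos_INR|exact HLpos|exact IH].
Qed.

Hypothesis d0 : d 0 = 1.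
Hypothesis d1 : d 1 = 4.

Lemma d_initial_values :
  d 2 = 28 /\ d 3 = 256 /\ d 4 = 2716 /\ d 5 = 31504 /\ d 6 = 387136
  /\ d 7 = 4951552 /\ d 8 = 65218204.
Proof.
  pose proof (d_rec 0). pose proof (d_rec 1). pose proof (d_rec 2). pose proof (d_rec 3).
  pose proof (d_rec 4). pose proof (d_rec 5). pose proof (d_rec 6).
  unfold rec_a, rec_b, rec_c in *. simpl INR in *.
  repeat split; lra.
Qed.

Lemma ratio_le_ub n : (2 <= n)%coq_nat -> ratio d n <= ratio_ub (INR n).
Proof.
  apply ratio_le_bound.
  - intros m Hm. assert (Hx : 2 <= INR m) by (replace 2 with (INR 2) by (simpl; ring); apply le_INR; lia).
    split; [apply ratio_ub_pos; lra|].
    apply ratio_step_le_of; [lra|apply ratio_ub_pos; lra|].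
    rewrite S_INR. apply ratio_ub_step. lra.
  - unfold ratio, ratio_ub. destruct d_initial_values as (-> & -> & _). simpl INR. lra.
Qed.

Lemma ratio_ge_lb n : (5 <= n)%coq_nat -> ratio_lb (INR n) <= ratio d n.
Proof.
  apply ratio_ge_bound.
  - intros m Hm. assert (Hx : 5 <= INR m) by (replace 5 with (INR 5) by (simpl; ring); apply le_INR; lia).
    split; [apply ratio_lb_pos; lra|].
    apply ratio_step_ge_of; [lra|apply ratio_lb_pos; lra|].
    rewrite S_INR. apply ratio_lb_step. lra.
  - unfold ratio, ratio_lb, ratio_ub. destruct d_initial_values as (_ & _ & _ & -> & -> & _).
    simpl INR. lra.
Qed.

Lemma ratio_log_convex_large k : (5 <= k)%coq_nat ->
  ratio d k * ratio d (S (S k)) ^ 3 <= ratio d (S k) ^ 3 * ratio d (S (S (S k))).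
Proof.
  intros Hk. set (x := INR (S k)).
  assert (Hx : 6 <= x) by (replace 6 with (INR 6) by (simpl; ring); apply le_INR; lia).
  assert (Hk0 : INR k = x - 1) by (unfold x; rewrite S_INR; ring).
  assert (Hk2 : INR (S (S k)) = x + 1) by (unfold x; rewrite (S_INR (S k)); ring).
  assert (Hk3 : INR (S (S (S k))) = x + 2) by (unfold x; rewrite !S_INR; ring).
  pose proof (ratio_le_ub k ltac:(lia)) as U0. pose proof (ratio_le_ub (S (S k)) ltac:(lia)) as U2.
  pose proof (ratio_ge_lb (S k) ltac:(lia)) as L1. pose proof (ratio_ge_lb (S (S (S k))) ltac:(lia)) as L3.
  rewrite Hk0 in U0. rewrite Hk2 in U2. rewrite Hk3 in L3. fold x in L1.
  pose proof (ratio_pos k). pose proof (ratio_pos (S (S k))).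
  pose proof (ratio_lb_pos x ltac:(lra)). pose proof (ratio_lb_pos (x + 2) ltac:(lra)).
  apply (Rle_trans _ (ratio_ub (x - 1) * ratio_ub (x + 1) ^ 3)).
  { apply Rmult_le_compat; try lra; [apply pow_le; lra|apply pow_incr; lra]. }
  apply (Rle_trans _ (ratio_lb x ^ 3 * ratio_lb (x + 2))); [apply ratio_bounds_log_convex; lra|].
  apply Rmult_le_compat; try lra; [apply pow_le; lra|apply pow_incr; lra].
Qed.

Theorem d_log_ineq k :
  d (S k) ^ 4 * d (S (S (S k))) ^ 4 <= d k * d (S (S (S (S k)))) * d (S (S k)) ^ 6.
Proof.
  destruct (Nat.le_gt_cases 5 k) as [Hk|Hk].
  - apply log_ineq_of_ratios; try apply d_pos. exact (ratio_log_convex_large k Hk).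
  - destruct d_initial_values as (d2 & d3 & d4 & d5 & d6 & d7 & d8).
    destruct k as [|[|[|[|[|k]]]]]; try lia;
      rewrite ?d0 ?d1 ?d2 ?d3 ?d4 ?d5 ?d6 ?d7 ?d8; lra.
Qed.

End Ratios.

Lemma INR_expn (m n : nat) : INR (m ^ n)%N = INR m ^ n.
Proof. induction n as [|n IH]; [reflexivity|]. rewrite expnS -multE mult_INR IH /=. ring. Qed.

Lemma domb_rec_R n : rec_c (INR n) * INR (domb n.+2) + rec_b (INR n) * INR (domb n)
                   = rec_a (INR n) * INR (domb n.+1).
Proof.
  pose proof (f_equal INR (domb_rec n)) as H.
  rewrite -!multE -!plusE !(plus_INR, mult_INR, INR_expn) in H.
  unfold rec_a, rec_b, rec_c.
  set (D0 := INR (domb n)) in *. set (D1 := INR (domb n.+1)) in *. set (D2 := INR (domb n.+2)) in *.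
  simpl INR in H. lra.
Qed.

Lemma domb_log_ineq_nat k :
  (domb k.+1 ^ 4 * domb k.+3 ^ 4 <= domb k * domb k.+4 * domb k.+2 ^ 6)%N.
Proof.
  apply/leP. apply INR_le. rewrite !(mult_INR, INR_expn).
  apply (d_log_ineq (fun n => INR (domb n))).
  - intros n. apply lt_0_INR. apply/ltP. apply domb_gt0.
  - exact domb_rec_R.
  - by rewrite /domb unlock.
  - by rewrite /domb unlock /=; lra.
Qed.

End DombRatios.

Theorem proposition2p15 :
  forall n : nat, (1 <= n)%N ->
    domb_y n.-1 * domb_y n.+1 >= domb_y n ^+ 2.
Proof.
  move=> [|k] // _.
  have pos m : (domb m)%:R != 0 :> rat by rewrite pnatr_eq0 -lt0n domb_gt0.
  rewrite /domb_y /= -subr_ge0.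
  have -> : (domb k.+2)%:R * (domb k)%:R / (domb k.+1)%:R ^+ 2 *
      ((domb k.+4)%:R * (domb k.+2)%:R / (domb k.+3)%:R ^+ 2)
      - ((domb k.+3)%:R * (domb k.+1)%:R / (domb k.+2)%:R ^+ 2) ^+ 2
      = ((domb k * domb k.+4 * domb k.+2 ^ 6)%:R - (domb k.+1 ^ 4 * domb k.+3 ^ 4)%:R)
        / ((domb k.+1)%:R ^+ 2 * (domb k.+3)%:R ^+ 2 * (domb k.+2)%:R ^+ 4) :> rat.
    by field; rewrite !pos.
  apply: divr_ge0; last by rewrite !mulr_ge0 // exprn_ge0 // ler0n.
  by rewrite subr_ge0 ler_nat DombRatios.domb_log_ineq_nat.
Qed.
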